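(* Let $S$ be a probability law on $\{1,2,\dots\}$ and write $\hat S(\lambda)=\sum_{j\ge1}S(j)e^{ij\lambda}=\rho(\lambda)e^{i\tau(\lambda)}$ with $\rho(\lambda)=|\hat S(\lambda)|$. Then for all $r\in[0,1)$ and $\theta\in(-\pi,\pi)$, $$\frac14\int_{-\pi}^{\pi}\left(\frac1\pi+P_{r\rho(\lambda)}(\tau(\lambda)-\theta)+P_{r\rho(\lambda)}(\tau(\lambda)+\theta)\right)d\lambda=1.$$
   Context: $P_s(t)$ denotes the Poisson kernel $P_s(t)=\frac{1}{2\pi}\,\frac{1-s^2}{1-2s\cos t+s^2}$ for $s\in[0,1)$. *)

From Stdlib Require Import Reals.
From Coquelicot Require Import Coquelicot.
Open Scope R_scope.

Definition poisson (s t : R) : R :=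
  / (2 * PI) * ((1 - s ^ 2) / (1 - 2 * s * cos t + s ^ 2)).

Definition prob_law_pos (S : nat -> R) : Prop :=
  S 0%nat = 0 /\ (forall j, 0 <= S j) /\ is_series S 1.

Definition hatS (S : nat -> R) (l : R) : C :=
  (Series (fun j => S j * cos (INR j * l)), Series (fun j => S j * sin (INR j * l))).

From Stdlib Require Import Reals Lra Lia.
From Coquelicot Require Import Coquelicot.
Open Scope R_scope.

(* Put [w = r e^{-i theta}] and [z(l) = w \hat S(l) = r rho(l) e^{i(tau(l) - theta)}], so that
   [|z| <= r < 1] and [P_{r rho}(tau - theta) = (1 + 2 Re (z / (1 - z))) / (2 pi)].
   Expanding [z / (1 - z) = sum_{n >= 1} w^n \hat S^n] (uniformly in [l]), it suffices that
   [int_{-pi}^{pi} \hat S^n = 0] for [n >= 1].  Since [S] lives on [{1, 2, ...}], [\hat S] has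
   only positive frequencies, and multiplying by [\hat S] maps functions with nonnegative
   frequencies to functions with positive frequencies; so every [\hat S^n], [n >= 1], has mean
   zero and each Poisson integral equals [1].  The two of them plus [2 pi / pi] give [4]. *)

Definition cis (t : R) : C := (cos t, sin t).

Lemma Cmod_cis t : Cmod (cis t) = 1.
Proof.
  unfold Cmod, cis; simpl.
  replace (cos t * (cos t * 1) + sin t * (sin t * 1)) with 1
    by (pose proof (sin2_cos2 t); unfold Rsqr in *; lra).
  apply sqrt_1.
Qed.

Lemma cis_0 : cis 0 = RtoC 1.
Proof. unfold cis; rewrite cos_0, sin_0; reflexivity. Qed.

Lemma cis_add a b : cis (a + b) = (cis a * cis b)%C.
Proof. unfold cis, Cmult; simpl; rewrite cos_plus, sin_plus; f_equal; ring. Qed.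

Lemma Cmod_1_minus_ge (z : C) : 1 - Cmod z <= Cmod (1 - z).
Proof.
  pose proof (Cmod_triangle (1 - z) z) as tri.
  replace (1 - z + z)%C with (RtoC 1) in tri by ring.
  rewrite Cmod_1 in tri; lra.
Qed.

Lemma Cminus_1_neq0 (z : C) : Cmod z < 1 -> (1 - z)%C <> RtoC 0.
Proof. intros z_lt1 E; pose proof (Cmod_1_minus_ge z) as ge; rewrite E, Cmod_0 in ge; lra. Qed.

Lemma geom_remainder (z : C) N : Cmod z < 1 ->
  (z / (1 - z) - sum_n (fun n => Cpow z (S n)) N = Cpow z (S (S N)) / (1 - z))%C.
Proof.
  intros z_lt1; pose proof (Cminus_1_neq0 z z_lt1) as one_minus_z_neq0.
  induction N as [|N IH].
  - rewrite sum_O; simpl; field; exact one_minus_z_neq0.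
  - rewrite sum_Sn; change (plus ?u ?v) with (u + v)%C.
    replace (z / (1 - z) - (sum_n (fun n => Cpow z (S n)) N + Cpow z (S (S N))))%C
      with (z / (1 - z) - sum_n (fun n => Cpow z (S n)) N - Cpow z (S (S N)))%C by ring.
    rewrite IH; simpl; field; exact one_minus_z_neq0.
Qed.

Lemma poisson_Re (s t : R) : 0 <= s < 1 ->
  poisson s t = / (2 * PI) + / PI * Re (s * cis t / (1 - s * cis t))%C.
Proof.
  intros s_range; pose proof PI_RGT_0; pose proof (COS_bound t).
  pose proof (sin2_cos2 t) as pythagoras; unfold Rsqr in pythagoras.
  assert (denom_pos : 0 < 1 - 2 * s * cos t + s ^ 2) by nra.
  unfold poisson, Re, Cdiv, Cinv, Cmult, Cminus, Cplus, Copp, RtoC, cis; cbn [fst snd].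
  replace ((1 + - (s * cos t - 0 * sin t)) ^ 2 + (0 + - (s * sin t + 0 * cos t)) ^ 2)
    with (1 - 2 * s * cos t + s ^ 2) by nra.
  field_simplify_eq; [nra | split; lra].
Qed.

Lemma norm_C (z : C) : @norm R_AbsRing C_R_NormedModule z = Cmod z.
Proof.
  unfold norm; simpl; unfold prod_norm, Cmod, abs; simpl.
  rewrite !Rmult_1_r, <- !Rabs_mult, !Rabs_pos_eq by apply Rle_0_sqr; reflexivity.
Qed.

Lemma is_RInt_C_ext (f g : R -> C) a b (l : C) :
  (forall x, f x = g x) -> is_RInt f a b l -> is_RInt g a b l.
Proof. intros fg; apply is_RInt_ext; intros x _; apply fg. Qed.

Lemma is_RInt_Cplus (f g : R -> C) a b (lf lg : C) :
  is_RInt f a b lf -> is_RInt g a b lg -> is_RInt (fun x => f x + g x)%C a b (lf + lg)%C.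
Proof. exact (is_RInt_plus f g a b lf lg). Qed.

Lemma is_RInt_Cmult_l (f : R -> C) a b (c l : C) :
  is_RInt f a b l -> is_RInt (fun x => c * f x)%C a b (c * l)%C.
Proof.
  intros If.
  pose proof (fun k => is_RInt_scal _ _ _ k _ (is_RInt_fct_extend_fst _ _ _ _ If)) as I1.
  pose proof (fun k => is_RInt_scal _ _ _ k _ (is_RInt_fct_extend_snd _ _ _ _ If)) as I2.
  apply is_RInt_fct_extend_pair.
  - exact (is_RInt_minus _ _ _ _ _ _ (I1 (fst c)) (I2 (snd c))).
  - apply (is_RInt_ext (fun t => snd c * fst (f t) + fst c * snd (f t))).
    { intros t _; cbn; ring. }
    replace (fst c * snd l + snd c * fst l) with (snd c * fst l + fst c * snd l) by ring.
    exact (is_RInt_plus _ _ _ _ _ _ (I1 (snd c)) (I2 (fst c))).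
Qed.

Lemma is_RInt_C0 a b : is_RInt (fun _ => RtoC 0) a b (RtoC 0).
Proof.
  pose proof (@is_RInt_const C_R_NormedModule a b zero) as int_const.
  rewrite (@scal_zero_r R_Ring C_R_ModuleSpace) in int_const; exact int_const.
Qed.

Lemma is_RInt_unif_lim {V : CompleteNormedModule R_AbsRing} (fN : nat -> R -> V) (f : R -> V)
  (e : nat -> R) a b (l : V) :
  (forall N, is_RInt (fN N) a b l) -> is_lim_seq e 0 ->
  (forall N x, norm (minus (f x) (fN N x)) <= e N) -> is_RInt f a b l.
Proof.
  intros IfN e_lim fN_close.
  destruct (filterlim_RInt fN a b eventually _ (f : fct_UniformSpace R V) (fun _ => l) IfN)
    as [If [l_lim If_int]].
  - intros P [eps HP].
    destruct (e_lim (fun y => Rabs y < eps)) as [N0 HN0].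
    { exists eps; intros y Hy; change (Rabs (y - 0) < eps) in Hy.
      rewrite Rminus_0_r in Hy; exact Hy. }
    exists N0; intros N HN; apply HP; intro x.
    apply (@norm_compat1 R_AbsRing V).
    specialize (HN0 N HN). specialize (fN_close N x).
    rewrite <- norm_opp, opp_minus.
    apply (Rle_lt_trans _ (e N)); [exact fN_close |].
    apply (Rle_lt_trans _ _ _ (Rle_abs (e N))), HN0.
  - rewrite (filterlim_locally_unique _ l If (filterlim_const l) l_lim); exact If_int.
Qed.

Lemma is_RInt_cis_nat (m : nat) : (0 < m)%nat ->
  is_RInt (fun x => cis (INR m * x)) (- PI) PI (RtoC 0).
Proof.
  intros m_pos; apply lt_0_INR in m_pos; set (k := INR m) in *.
  assert (sin_kPI : sin (k * PI) = 0)
    by (apply sin_eq_0_1; exists (Z.of_nat m); rewrite <- INR_IZR_INZ; reflexivity).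
  apply is_RInt_fct_extend_pair; unfold cis; cbn [fst snd].
  - replace 0 with (minus (sin (k * PI) / k) (sin (k * - PI) / k))
      by (unfold minus, plus, opp; simpl; rewrite Ropp_mult_distr_r_reverse, sin_neg, sin_kPI;
          field; lra).
    apply (is_RInt_derive (fun x => sin (k * x) / k)); intros x _.
    + auto_derive; [auto | field; lra].
    + apply (@ex_derive_continuous R_AbsRing R_NormedModule); auto_derive; auto.
  - replace 0 with (minus (- cos (k * PI) / k) (- cos (k * - PI) / k))
      by (unfold minus, plus, opp; simpl; rewrite Ropp_mult_distr_r_reverse, cos_neg;
          field; lra).
    apply (is_RInt_derive (fun x => - cos (k * x) / k)); intros x _.
    + auto_derive; [auto | field; lra].
    + apply (@ex_derive_continuous R_AbsRing R_NormedModule); auto_derive; auto.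
Qed.

(* With [\hat h(m) = (2 pi)^{-1} int h(x) e^{-imx} dx], the integral below is [2 pi \hat h(-k)]:
   [positive_spectrum h] says [\hat h(m) = 0] for [m <= 0], [nonneg_spectrum h] for [m < 0]. *)
Definition positive_spectrum (h : R -> C) : Prop :=
  forall k : nat, is_RInt (fun x => h x * cis (INR k * x))%C (- PI) PI (RtoC 0).

Definition nonneg_spectrum (h : R -> C) : Prop :=
  forall k : nat, is_RInt (fun x => h x * cis (INR (S k) * x))%C (- PI) PI (RtoC 0).

Lemma nonneg_spectrum_1 : nonneg_spectrum (fun _ => RtoC 1).
Proof.
  intro k; apply (is_RInt_C_ext (fun x => cis (INR (S k) * x))).
  - intro x; symmetry; apply Cmult_1_l.
  - apply is_RInt_cis_nat; lia.
Qed.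

Definition hatS_partial (p : nat -> R) (N : nat) (x : R) : C :=
  (sum_n (fun j => p j * cos (INR j * x)) N, sum_n (fun j => p j * sin (INR j * x)) N).

Lemma hatS_partial_0 p x : hatS_partial p 0 x = (p 0%nat * cis (INR 0 * x))%C.
Proof. unfold hatS_partial, cis, Cmult, RtoC; cbn [fst snd]; rewrite !sum_O; f_equal; ring. Qed.

Lemma hatS_partial_succ p N x :
  hatS_partial p (S N) x = (hatS_partial p N x + p (S N) * cis (INR (S N) * x))%C.
Proof.
  unfold hatS_partial, cis, Cmult, Cplus, RtoC; cbn [fst snd].
  rewrite !sum_Sn; f_equal; unfold plus; simpl; ring.
Qed.

Section ProbabilityLaw.

Variable p : nat -> R.
Hypothesis Hp : prob_law_pos p.

Lemma Rabs_law_mult_le (c : R) j : Rabs c <= 1 -> Rabs (p j * c) <= p j.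
Proof.
  destruct Hp as [_ [p_ge0 _]]; intros c_le1; specialize (p_ge0 j).
  rewrite Rabs_mult, (Rabs_pos_eq (p j)) by exact p_ge0; nra.
Qed.

Lemma ex_series_law_mult (c : nat -> R) :
  (forall j, Rabs (c j) <= 1) -> ex_series (fun j => p j * c j).
Proof.
  intros c_le1; apply (@ex_series_le R_AbsRing R_CompleteNormedModule _ p).
  - intro j; apply Rabs_law_mult_le, c_le1.
  - exists 1; apply Hp.
Qed.

Lemma Series_law_mult_tail (c : nat -> R) N :
  (forall j, Rabs (c j) <= 1) ->
  Rabs (Series (fun j => p j * c j) - sum_n (fun j => p j * c j) N) <= 1 - sum_n p N.
Proof.
  intros c_le1; set (pc := fun j => p j * c j).
  apply (is_lim_seq_le_loc (fun M => Rabs (sum_n pc M - sum_n pc N))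
    (fun M => sum_n p M - sum_n p N) (Rabs (Series pc - sum_n pc N)) (1 - sum_n p N)).
  - exists N; intros M NM.
    assert (partial_diff : forall u : nat -> R, sum_n u M - sum_n u N = sum_n_m u (S N) M)
      by (intro u; symmetry; exact (sum_n_m_sum_n u N M NM)).
    rewrite !partial_diff.
    apply (Rle_trans _ _ _ (norm_sum_n_m pc _ _)), sum_n_m_le; intro j.
    apply Rabs_law_mult_le, c_le1.
  - apply (is_lim_seq_abs _ (Series pc - sum_n pc N)), is_lim_seq_minus'.
    + apply Series_correct, ex_series_law_mult, c_le1.
    + apply is_lim_seq_const.
  - apply is_lim_seq_minus'; [apply Hp | apply is_lim_seq_const].
Qed.

Lemma is_lim_seq_law_tail : is_lim_seq (fun N => 1 - sum_n p N) 0.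
Proof.
  replace 0 with (1 - 1) by ring.
  apply is_lim_seq_minus'; [apply is_lim_seq_const | apply Hp].
Qed.

Lemma Cmod_hatS_partial_le N x : Cmod (hatS_partial p N x) <= sum_n p N.
Proof.
  destruct Hp as [_ [p_ge0 _]].
  induction N as [|N IH].
  - rewrite hatS_partial_0, sum_O, Cmod_mult, Cmod_R, Cmod_cis, Rabs_pos_eq by auto; lra.
  - rewrite hatS_partial_succ, sum_Sn.
    apply (Rle_trans _ _ _ (Cmod_triangle _ _)).
    rewrite Cmod_mult, Cmod_R, Cmod_cis, Rabs_pos_eq by auto.
    change (plus (sum_n p N) (p (S N))) with (sum_n p N + p (S N)); lra.
Qed.

Lemma Cmod_hatS_sub_partial N x :
  Cmod (hatS p x - hatS_partial p N x) <= sqrt 2 * (1 - sum_n p N).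
Proof.
  apply (Rle_trans _ _ _ (Cmod_2Rmax _)), Rmult_le_compat_l; [apply sqrt_pos |].
  apply Rmax_lub; apply Series_law_mult_tail; intro j;
    apply Rabs_le; first [apply COS_bound | apply SIN_bound].
Qed.

Lemma Cmod_hatS_le1 x : Cmod (hatS p x) <= 1.
Proof.
  apply (is_lim_seq_le (fun _ => Cmod (hatS p x))
    (fun N => sum_n p N + sqrt 2 * (1 - sum_n p N)) (Cmod (hatS p x)) 1).
  - intro N.
    replace (hatS p x) with (hatS_partial p N x + (hatS p x - hatS_partial p N x))%C by ring.
    apply (Rle_trans _ _ _ (Cmod_triangle _ _)), Rplus_le_compat.
    + apply Cmod_hatS_partial_le.
    + apply Cmod_hatS_sub_partial.
  - apply is_lim_seq_const.
  - replace (Finite 1) with (Finite (1 + sqrt 2 * 0)) by (f_equal; ring).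
    apply is_lim_seq_plus'; [apply Hp |].
    apply (is_lim_seq_scal_l _ (sqrt 2) 0), is_lim_seq_law_tail.
Qed.

Lemma positive_spectrum_hatS_mult (h : R -> C) :
  (forall x, Cmod (h x) <= 1) -> nonneg_spectrum h ->
  positive_spectrum (fun x => hatS p x * h x)%C.
Proof.
  intros h_le1 h_spec k; set (q := fun x => (h x * cis (INR k * x))%C).
  apply (is_RInt_C_ext (fun x => hatS p x * q x)%C).
  { intro x; unfold q; ring. }
  apply (@is_RInt_unif_lim C_R_CompleteNormedModule (fun N x => hatS_partial p N x * q x)%C _
    (fun N => sqrt 2 * (1 - sum_n p N))).
  - assert (term_int : forall j,
      is_RInt (fun x => p j * cis (INR j * x) * q x)%C (- PI) PI (RtoC 0)).
    { intros [|j].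
      - destruct Hp as [p0 _]; rewrite p0.
        apply (is_RInt_C_ext (fun _ => RtoC 0)); [intro x; ring | apply is_RInt_C0].
      - apply (is_RInt_C_ext (fun x => p (S j) * (h x * cis (INR (S (j + k)) * x)))%C).
        { intro x; unfold q.
          replace (INR (S (j + k)) * x) with (INR (S j) * x + INR k * x)
            by (rewrite <- Rmult_plus_distr_r, <- plus_INR; reflexivity).
          rewrite cis_add; ring. }
        replace (RtoC 0) with (p (S j) * RtoC 0)%C by ring.
        apply is_RInt_Cmult_l, h_spec. }
    intro N; induction N as [|N IH].
    + apply (is_RInt_C_ext (fun x => p 0%nat * cis (INR 0 * x) * q x)%C), term_int.
      intro x; rewrite hatS_partial_0; reflexivity.
    + replace (RtoC 0) with (RtoC 0 + RtoC 0)%C by ring.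
      apply (is_RInt_C_ext (fun x => hatS_partial p N x * q x
                                     + p (S N) * cis (INR (S N) * x) * q x)%C).
      { intro x; rewrite hatS_partial_succ; ring. }
      apply is_RInt_Cplus; [exact IH | apply term_int].
  - replace (Finite 0) with (Rbar_mult (sqrt 2) 0) by (simpl; f_equal; ring).
    apply is_lim_seq_scal_l, is_lim_seq_law_tail.
  - intros N x; rewrite norm_C; change (minus ?u ?v) with (u - v)%C.
    replace (hatS p x * q x - hatS_partial p N x * q x)%C
      with ((hatS p x - hatS_partial p N x) * q x)%C by ring.
    rewrite Cmod_mult; unfold q; rewrite Cmod_mult, Cmod_cis, Rmult_1_r.
    pose proof (Cmod_hatS_sub_partial N x); pose proof (h_le1 x).
    pose proof (Cmod_ge_0 (hatS p x - hatS_partial p N x)); pose proof (Cmod_ge_0 (h x)).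
    nra.
Qed.

Lemma Cmod_hatS_pow_le1 n x : Cmod (Cpow (hatS p x) n) <= 1.
Proof.
  rewrite Cmod_pow, <- (pow1 n); apply pow_incr.
  split; [apply Cmod_ge_0 | apply Cmod_hatS_le1].
Qed.

Lemma nonneg_spectrum_hatS_pow n : nonneg_spectrum (fun x => Cpow (hatS p x) n).
Proof.
  induction n as [|n IH]; [exact nonneg_spectrum_1 |].
  intro k; exact (positive_spectrum_hatS_mult _ (Cmod_hatS_pow_le1 n) IH (S k)).
Qed.

Lemma is_RInt_hatS_pow n : is_RInt (fun x => Cpow (hatS p x) (S n)) (- PI) PI (RtoC 0).
Proof.
  apply (is_RInt_C_ext (fun x => hatS p x * Cpow (hatS p x) n * cis (INR 0 * x))%C).
  - intro x; change (INR 0) with 0; rewrite Rmult_0_l, cis_0; simpl; ring.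
  - exact (positive_spectrum_hatS_mult _ (Cmod_hatS_pow_le1 n)
             (nonneg_spectrum_hatS_pow n) 0%nat).
Qed.

Lemma is_RInt_hatS_geom (w : C) : Cmod w < 1 ->
  is_RInt (fun x => w * hatS p x / (1 - w * hatS p x))%C (- PI) PI (RtoC 0).
Proof.
  intros w_lt1; pose proof (Cmod_ge_0 w); set (r := Cmod w) in *.
  assert (z_le : forall x, Cmod (w * hatS p x) <= r).
  { intro x; rewrite Cmod_mult; pose proof (Cmod_hatS_le1 x); pose proof (Cmod_ge_0 (hatS p x)).
    fold r; nra. }
  apply (@is_RInt_unif_lim C_R_CompleteNormedModule
    (fun N x => sum_n (fun n => Cpow (w * hatS p x) (S n)) N) _ (fun N => r ^ N / (1 - r))).
  - assert (term_int : forall n,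
      is_RInt (fun x => Cpow (w * hatS p x) (S n)) (- PI) PI (RtoC 0)).
    { intro n; apply (is_RInt_C_ext (fun x => Cpow w (S n) * Cpow (hatS p x) (S n))%C).
      - intro x; symmetry; apply Cpow_mult_l.
      - replace (RtoC 0) with (Cpow w (S n) * RtoC 0)%C by ring.
        apply is_RInt_Cmult_l, is_RInt_hatS_pow. }
    intro N; induction N as [|N IH].
    + apply (is_RInt_C_ext _ _ _ _ _ (fun x => eq_sym (sum_O _))), term_int.
    + replace (RtoC 0) with (RtoC 0 + RtoC 0)%C by ring.
      apply (is_RInt_C_ext (fun x => sum_n (fun n => Cpow (w * hatS p x) (S n)) N
                                     + Cpow (w * hatS p x) (S (S N)))%C).
      { intro x; rewrite sum_Sn; reflexivity. }
      apply is_RInt_Cplus; [exact IH | apply term_int].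
  - replace (Finite 0) with (Rbar_mult 0 (/ (1 - r))) by (simpl; f_equal; ring).
    apply is_lim_seq_scal_r, is_lim_seq_geom; rewrite Rabs_pos_eq; lra.
  - intros N x; rewrite norm_C; change (minus ?u ?v) with (u - v)%C.
    set (z := (w * hatS p x)%C); pose proof (z_le x) as z_le_r; fold z in z_le_r.
    pose proof (Cmod_ge_0 z); pose proof (Cmod_1_minus_ge z).
    rewrite geom_remainder, Cmod_div, Cmod_pow by (lra || apply Cminus_1_neq0; lra).
    assert (z_pow_le : Cmod z ^ N <= r ^ N) by (apply pow_incr; lra).
    pose proof (pow_le (Cmod z) N).
    unfold Rdiv; apply Rmult_le_compat.
    + apply pow_le; lra.
    + left; apply Rinv_0_lt_compat; lra.
    + apply (Rle_trans _ (Cmod z ^ N)); [simpl | exact z_pow_le].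
      assert (Cmod z * Cmod z ^ N <= Cmod z ^ N) by nra; nra.
    + apply Rinv_le_contravar; lra.
Qed.

Lemma is_RInt_poisson_hatS (rho tau : R -> R) :
  (forall l, rho l = Cmod (hatS p l)) ->
  (forall l, hatS p l = (rho l * cos (tau l), rho l * sin (tau l))) ->
  forall r theta, 0 <= r < 1 ->
  is_RInt (fun l => poisson (r * rho l) (tau l - theta)) (- PI) PI 1.
Proof.
  intros rho_mod polar r theta r_range; pose proof PI_RGT_0.
  set (w := (r * cis (- theta))%C).
  assert (w_lt1 : Cmod w < 1) by (unfold w; rewrite Cmod_mult, Cmod_R, Cmod_cis, Rabs_pos_eq; lra).
  pose proof (is_RInt_fct_extend_fst _ _ _ _ (is_RInt_hatS_geom w w_lt1)) as Re_int.
  pose proof (is_RInt_plus _ _ _ _ _ _ (is_RInt_const (- PI) PI (/ (2 * PI)))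
                (is_RInt_scal _ _ _ (/ PI) _ Re_int)) as total.
  replace 1 with (plus (scal (PI - - PI) (/ (2 * PI))) (scal (/ PI) (fst (RtoC 0))))
    by (unfold plus, scal; simpl; unfold mult; simpl; field; lra).
  refine (is_RInt_ext _ _ _ _ _ _ total); intros l _; cbv beta.
  assert (rho_range : 0 <= r * rho l < 1).
  { rewrite rho_mod; pose proof (Cmod_hatS_le1 l); pose proof (Cmod_ge_0 (hatS p l)); nra. }
  assert (w_hatS : (w * hatS p l = RtoC (r * rho l) * cis (tau l - theta))%C).
  { rewrite polar; unfold w, cis, Cmult, RtoC; cbn [fst snd].
    rewrite cos_minus, sin_minus, cos_neg, sin_neg; f_equal; ring. }
  rewrite poisson_Re, <- w_hatS by exact rho_range; reflexivity.
Qed.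

End ProbabilityLaw.

Theorem lemma5p2 (S : nat -> R) (rho tau : R -> R) :
  prob_law_pos S ->
  (forall l, rho l = Cmod (hatS S l)) ->
  (forall l, hatS S l = (rho l * cos (tau l), rho l * sin (tau l))) ->
  forall r theta : R, 0 <= r < 1 -> - PI < theta < PI ->
  / 4 * RInt (fun l => / PI + poisson (r * rho l) (tau l - theta)
                            + poisson (r * rho l) (tau l + theta)) (- PI) PI = 1.
Proof.
  intros law rho_mod polar r theta r_range _; pose proof PI_RGT_0.
  pose proof (is_RInt_poisson_hatS S law rho tau rho_mod polar r theta r_range) as int_minus.
  pose proof (is_RInt_poisson_hatS S law rho tau rho_mod polar r (- theta) r_range) as int_plus.
  pose proof (is_RInt_plus _ _ _ _ _ _
    (is_RInt_plus _ _ _ _ _ _ (is_RInt_const (- PI) PI (/ PI)) int_minus) int_plus) as total.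
  assert (int_4 : is_RInt (fun l => / PI + poisson (r * rho l) (tau l - theta)
                                  + poisson (r * rho l) (tau l + theta)) (- PI) PI 4).
  { replace 4 with (plus (plus (scal (PI - - PI) (/ PI)) 1) 1)
      by (unfold plus, scal; simpl; unfold mult; simpl; field; lra).
    refine (is_RInt_ext _ _ _ _ _ _ total); intros l _.
    unfold plus; simpl; unfold Rminus; rewrite Ropp_involutive; reflexivity. }
  rewrite (is_RInt_unique _ _ _ _ int_4); lra.
Qed.
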